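(* Let $\ell,k$ be integers with $1\le\ell\le k$. Then $\overline{\alpha}(\{1,2k,2k+2\ell\})\ge\frac{2k}{4k+2\ell}$.
   Context: For a finite set $S$ of positive integers, the distance graph $G(S)$ has vertex set $\mathbb{Z}$, with $i,j$ adjacent iff $|i-j|\in S$. The density of $A\subseteq\mathbb{Z}$ is $\delta(A)=\limsup_{N\to\infty}\frac{|A\cap[-N,N]|}{2N+1}$, and the independence ratio $\overline{\alpha}(S)$ is the supremum of $\delta(A)$ over independent sets $A$ of $G(S)$. *)

From HB Require Import structures.
From mathcomp Require Import all_boot all_order all_algebra.
From mathcomp Require Import all_classical all_reals all_analysis.
Set Implicit Arguments. Unset Strict Implicit. Unset Printing Implicit Defensive.
Import Order.TTheory GRing.Theory Num.Theory.
Local Open Scope classical_set_scope.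
Local Open Scope ring_scope.

Definition dist_adj (S : seq nat) (i j : int) : Prop := (`|i - j|%N \in S).

Definition independent (S : seq nat) (A : set int) : Prop :=
  forall i j, A i -> A j -> ~ dist_adj S i j.

Definition count_in (A : set int) (N : nat) : nat :=
  (\sum_(0 <= i < (2 * N).+1) (`[< A (i%:Z - N%:Z)%R >] : nat))%N.

Definition density_seq (R : realType) (A : set int) : R^nat :=
  fun N => (count_in A N)%:R / ((2 * N).+1)%:R.

Definition density (R : realType) (A : set int) : R :=
  limn_sup (density_seq R A).

Definition indep_ratio (R : realType) (S : seq nat) : R :=
  sup [set density R A | A in independent S].

(* Keep the integers whose residue modulo p = 4k + 2l is either even and
   below 2k or odd and in [2k, 4k): 2k residues per period, so density 2k/p.
   Two such residues, both below 4k, differ by less than 2k if they have the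
   same parity and by at least 3 otherwise.  Hence a difference 1, 2k or
   2k + 2l between two elements cannot occur with equal quotients by p, nor
   with quotients differing by one (the residues would then differ by p - 1,
   2k + 2l or 2k), while quotients two apart force a difference above p. *)
From HB Require Import structures.
From mathcomp Require Import all_boot all_order all_algebra.
From mathcomp Require Import all_classical all_reals all_analysis.
From mathcomp Require Import zify.
Import Order.TTheory GRing.Theory Num.Theory.
Local Open Scope ring_scope.

Lemma sum_mod_periodic (f : nat -> nat) (p c : nat) :
  (\sum_(0 <= i < c * p) f (i %% p) = c * \sum_(0 <= i < p) f i)%N.
Proof.
elim: c => [|c IH]; first by rewrite mul0n big_geq.
rewrite mulSn (big_cat_nat _ (n := c * p)) //= ?leq_addl // IH addnC.
congr (_ + _)%N; rewrite -{1}(add0n (c * p)%N) big_addn addnK.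
by apply: eq_big_nat => i /andP [_ ltip]; rewrite addnC modnMDl modn_small.
Qed.

Section Density.

Variable R : realType.
Implicit Type A : set int.

Lemma count_in_le A N : (count_in A N <= (2 * N).+1)%N.
Proof.
apply: leq_trans (_ : \sum_(0 <= i < (2 * N).+1) 1 <= _)%N.
  by apply: leq_sum => i _; case: asboolP.
by rewrite sum_nat_const_nat subn0 muln1.
Qed.

Lemma density_seq_ge0 A n : 0 <= density_seq R A n.
Proof. by rewrite divr_ge0. Qed.

Lemma density_seq_le1 A n : density_seq R A n <= 1.
Proof. by rewrite ler_pdivrMr ?ltr0n // mul1r ler_nat count_in_le. Qed.

Lemma bounded_density_seq A : bounded_fun (density_seq R A).
Proof.
rewrite /bounded_near; near=> M => n _ /=.
rewrite ger0_norm ?density_seq_ge0 //; apply: le_trans (density_seq_le1 A n) _.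
by near: M; exact: nbhs_pinfty_ge.
Unshelve. all: end_near. Qed.

Lemma density_le1 A : density R A <= 1.
Proof.
rewrite /density limn_supE; last exact: bounded_density_seq.
apply: le_trans (_ : sups (density_seq R A) 0 <= 1).
  apply: ge_inf; last by exists 0%N.
  exact/bounded_fun_has_lbound_sups/bounded_density_seq.
apply: ge_sup; first by exists (density_seq R A 0); exists 0%N.
by move=> _ [m _ <-]; apply: density_seq_le1.
Qed.

Lemma density_ge_cofinal A (c : R) :
  (forall n, exists2 m, (n <= m)%N & c <= density_seq R A m) -> c <= density R A.
Proof.
move=> cofinal; rewrite /density limn_supE; last exact: bounded_density_seq.
have ubA := bounded_fun_has_ubound (bounded_density_seq A).
apply: lb_le_inf; first by exists (sups (density_seq R A) 0); exists 0%N.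
move=> _ [n _ <-]; have [m lenm cleA] := cofinal n.
apply: le_trans cleA _; apply: ub_le_sup; last by exists m.
exact: has_ubound_sdrop.
Qed.

Lemma density_le_indep_ratio (S : seq nat) A :
  independent S A -> density R A <= indep_ratio R S.
Proof.
move=> indepA; apply: ub_le_sup; last by exists A.
by exists 1 => _ [B _ <-]; apply: density_le1.
Qed.

End Density.

Definition in_pattern (k r : nat) : bool :=
  (((r < 2 * k) && ~~ odd r) || ((2 * k <= r < 4 * k) && odd r))%N.

Definition pattern_period (k l : nat) : nat := 4 * k + 2 * l.

Definition pattern_set (k l : nat) : set int :=
  fun i => in_pattern k `|(i %% (pattern_period k l)%:Z)%Z|%N.

Lemma pattern_diff_nonadjacent (k l r s : nat) (m : int) :
  (0 < l)%N -> in_pattern k r -> in_pattern k s ->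
  `|(m * (pattern_period k l)%:Z + r%:Z - s%:Z)%R|%N
    \notin [:: 1%N; (2 * k)%N; (2 * k + 2 * l)%N].
Proof.
rewrite /pattern_period /in_pattern !inE => l_gt0.
have [->|[->|[->|m_large]]] : m = 0 \/ m = 1 \/ m = -1 \/ (2 <= m \/ m <= -2).
  by lia.
- by rewrite mul0r; lia.
- by rewrite mul1r; lia.
- by rewrite mulN1r; lia.
- nia.
Qed.

Lemma pattern_set_independent (k l : nat) : (0 < l)%N ->
  independent [:: 1%N; (2 * k)%N; (2 * k + 2 * l)%N] (pattern_set k l).
Proof.
move=> l_gt0 i j Ai Aj; rewrite /dist_adj.
set p := (pattern_period k l)%:Z.
have p_gt0 : 0 < p by rewrite ltz_nat /pattern_period; lia.
have divmodE x : x = (x %/ p)%Z * p + `|(x %% p)%Z|%N.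
  by rewrite gez0_abs ?modz_ge0 ?gt_eqF // -divz_eq.
have -> : i - j = ((i %/ p)%Z - (j %/ p)%Z) * p
                  + `|(i %% p)%Z|%N%:Z - `|(j %% p)%Z|%N%:Z.
  by rewrite {1}(divmodE i) {1}(divmodE j) mulrBl; lia.
by apply/negP; apply: pattern_diff_nonadjacent.
Qed.

Lemma sum_in_pattern_double (k j : nat) : (j <= 2 * k)%N ->
  (\sum_(0 <= i < 2 * j) in_pattern k i = j)%N.
Proof.
elim: j => [|j IH] lejk; first by rewrite big_geq.
have pair_sum : (in_pattern k (2 * j) + in_pattern k (2 * j).+1 = 1)%N.
  by rewrite /in_pattern; lia.
rewrite mulnS !big_nat_recr //= -addnA IH; last by lia.
by rewrite pair_sum addn1.
Qed.

Lemma sum_in_pattern_period (k l : nat) :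
  (2 * k <= \sum_(0 <= i < pattern_period k l) in_pattern k i)%N.
Proof.
rewrite (big_cat_nat _ (n := 2 * (2 * k))) //= /pattern_period; last by lia.
by rewrite sum_in_pattern_double ?leq_addr.
Qed.

Lemma count_pattern_set (k l n : nat) : (0 < k)%N ->
  (2 * n * (2 * k) + 1 <= count_in (pattern_set k l) (n * pattern_period k l))%N.
Proof.
move=> k_gt0; set p := pattern_period k l.
have shiftE i : (`[< pattern_set k l (i%:Z - (n * p)%N%:Z) >] : nat)
                = in_pattern k (i %% p).
  rewrite asboolb /pattern_set -/p PoszM -mulNr addrC.
  by rewrite modzMDl modz_nat absz_nat.
rewrite /count_in; under eq_bigr => i _ do rewrite shiftE.
rewrite big_nat_recr //= [(2 * (n * p))%N]mulnA modnMl.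
rewrite (sum_mod_periodic (fun r => nat_of_bool (in_pattern k r))).
rewrite leq_add ?leq_mul ?sum_in_pattern_period // /in_pattern.
by rewrite muln_gt0 k_gt0.
Qed.

Lemma density_pattern_set (R : realType) (k l : nat) : (0 < k)%N ->
  ((2 * k)%:R / (pattern_period k l)%:R : R) <= density R (pattern_set k l).
Proof.
move=> k_gt0; set p := pattern_period k l.
have p_gt0 : (0 < p)%N by rewrite /p /pattern_period; lia.
apply: density_ge_cofinal => n; exists (n * p)%N; first by rewrite leq_pmulr.
rewrite /density_seq ler_pdivlMr ?ltr0n // mulrAC ler_pdivrMr ?ltr0n //.
rewrite -!natrM ler_nat.
apply: leq_trans (leq_mul (count_pattern_set k l n k_gt0) (leqnn p)).
rewrite /p /pattern_period; nia.
Qed.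

Theorem lemma30 (R : realType) (l k : nat) (hl : (1 <= l)%N) (hlk : (l <= k)%N) :
  ((2 * k)%:R / (4 * k + 2 * l)%:R : R) <=
  indep_ratio R [:: 1%N; (2 * k)%N; (2 * k + 2 * l)%N].
Proof.
apply: le_trans (density_pattern_set R k l (leq_trans hl hlk)) _.
exact/density_le_indep_ratio/pattern_set_independent.
Qed.
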